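(* Let $K\subseteq\mathbb{R}^n$ be any closed convex cone and $c\in\mathbb{R}^n$ an arbitrary vector. Then the set $\{X\in\mathbb{S}^n_+:\ Xc\in K\}$ is rank-one generated.
   Context: $\mathbb{S}^n_+$ is the cone of real symmetric positive semidefinite $n\times n$ matrices. A closed convex cone $\mathcal{S}\subseteq\mathbb{S}^n_+$ is rank-one generated (ROG) if $\mathcal{S}=\mathrm{conv}(\mathcal{S}\cap\{xx^\top:x\in\mathbb{R}^n\})$. *)

(* The topology on 'cV[R]_n and 'M[R]_n is the product (entrywise) topology
   from matrix_topology.v. *)
From HB Require Import structures.
From mathcomp Require Import all_boot all_order all_algebra.
From mathcomp Require Import all_classical all_reals all_analysis.
Set Implicit Arguments. Unset Strict Implicit. Unset Printing Implicit Defensive.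
Import Order.TTheory GRing.Theory Num.Theory.
Import numFieldNormedType.Exports.
Local Open Scope classical_set_scope.
Local Open Scope ring_scope.

Definition convex_cone (R : realType) (m n : nat) (K : set 'M[R]_(m, n)) : Prop :=
  forall x y, K x -> K y -> forall a b : R, 0 <= a -> 0 <= b -> K (a *: x + b *: y).

Definition closed_convex_cone (R : realType) (m n : nat) (K : set 'M[R]_(m, n)) : Prop :=
  closed K /\ convex_cone K.

Definition psd (R : realType) (n : nat) : set 'M[R]_n :=
  [set X | X^T = X /\ forall x : 'cV[R]_n, 0 <= (x^T *m X *m x) 0 0].

Definition rank_one_set (R : realType) (n : nat) : set 'M[R]_n :=
  [set X | exists x : 'cV[R]_n, X = x *m x^T].

Definition conv (R : realType) (n : nat) (A : set 'M[R]_n) : set 'M[R]_n :=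
  [set X | exists (k : nat) (lam : 'I_k -> R) (P : 'I_k -> 'M[R]_n),
     (forall i, 0 <= lam i) /\ \sum_(i < k) lam i = 1 /\
     (forall i, A (P i)) /\ X = \sum_(i < k) lam i *: P i].

Definition ROG (R : realType) (n : nat) (S : set 'M[R]_n) : Prop :=
  [/\ closed_convex_cone S, S `<=` @psd R n & S = @conv R n (S `&` @rank_one_set R n)].

From Pilot Require Import Defs.
From HB Require Import structures.
From mathcomp Require Import all_boot all_order all_algebra.
From mathcomp Require Import all_classical all_reals all_analysis.
From mathcomp Require Import ring.
Set Implicit Arguments. Unset Strict Implicit. Unset Printing Implicit Defensive.
Import Order.TTheory GRing.Theory Num.Theory.
Import numFieldNormedType.Exports.
Local Open Scope classical_set_scope.
Local Open Scope ring_scope.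

(* Given X PSD with Xc in K, peel off y = Xc / sqrt(c^T X c) (or y = 0 when
   c^T X c = 0): then y y^T c = Xc lies in K while X - y y^T is PSD and kills c.
   Peeling X - y y^T further along the standard basis writes it as a sum of
   terms z z^T whose vectors z vanish on its kernel, hence z^T c = 0 and
   z z^T c = 0 lies in K.  So X is a sum, hence after rescaling a convex
   combination, of rank-one matrices of the set.  Closedness and convexity are
   inherited from the PSD cone and from K. *)

Section Continuity.
Context {R : numFieldType}.

Lemma continuous_sum (T : topologicalType) (V : normedModType R) (I : Type)
    (r : seq I) (P : pred I) (f : I -> T -> V) :
  (forall i, P i -> continuous (f i)) ->
  continuous (fun x => \sum_(i <- r | P i) f i x).
Proof.
move=> fc; rewrite -fct_sumE.
elim/big_ind: _ => //.
- exact: cst_continuous.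
- by move=> g h gc hc x; exact: (continuousD (gc x) (hc x)).
Qed.

Lemma continuous_mulmx_coord m n p q (A : 'M[R]_(p, m)) (B : 'M[R]_(n, q)) i j :
  continuous (fun X : 'M[R]_(m, n) => (A *m X *m B) i j).
Proof.
have -> : (fun X : 'M[R]_(m, n) => (A *m X *m B) i j) =
    (fun X => \sum_(l < n) \sum_(k < m) (A i k * B l j) *: X k l).
  apply/funext => X; rewrite mxE; apply: eq_bigr => l _; rewrite mxE mulr_suml.
  by apply: eq_bigr => k _; rewrite mulrAC.
apply: continuous_sum => l _; apply: continuous_sum => k _ X.
exact/continuousZl_tmp/coord_continuous.
Qed.

Lemma continuous_mx (T : topologicalType) m n (f : T -> 'M[R]_(m, n)) :
  (forall i j, continuous (fun x => f x i j)) -> continuous f.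
Proof.
move=> fc x; apply/cvg_mx_entourageP => A entA.
apply: filter_forall => i; apply: filter_forall => j.
move/cvg_entourageP/(_ A entA): (fc i j x) => Aij.
by near=> y; rewrite inE; near: y.
Unshelve. all: by end_near. Qed.

Lemma continuous_mulmxr m n p (B : 'M[R]_(n, p)) :
  continuous (fun X : 'M[R]_(m, n) => X *m B).
Proof.
apply: continuous_mx => i j.
have -> : (fun X : 'M[R]_(m, n) => (X *m B) i j) = (fun X => (1%:M *m X *m B) i j).
  by apply/funext => X; rewrite mul1mx.
exact: continuous_mulmx_coord.
Qed.

End Continuity.

Lemma affine_ge0_slope_eq0 (R : numFieldType) (a b : R) :
  (forall t, 0 <= a + t * b) -> b = 0.
Proof.
move=> ge0; apply/eqP/negPn/negP => b0.
by have := ge0 (- (a + 1) / b); rewrite divfK // opprD addrA subrr add0r ler0N1.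
Qed.

Section MxForm.
Variables (R : comRingType) (n : nat).
Implicit Types (X Y : 'M[R]_n) (x y z e : 'cV[R]_n).

Definition mxform X x y := (x^T *m X *m y) 0 0.

Lemma mxformC X x y : X^T = X -> mxform X x y = mxform X y x.
Proof.
move=> symX; rewrite /mxform.
have -> : y^T *m X *m x = (x^T *m X *m y)^T by rewrite !trmx_mul trmxK symX mulmxA.
by rewrite [RHS]mxE.
Qed.

Lemma mxformDl X x y z : mxform X (x + y) z = mxform X x z + mxform X y z.
Proof. by rewrite /mxform linearD /= !mulmxDl mxE. Qed.

Lemma mxformZl X a x z : mxform X (a *: x) z = a * mxform X x z.
Proof. by rewrite /mxform linearZ /= -!scalemxAl mxE. Qed.

Lemma mxformDr X x y z : mxform X z (x + y) = mxform X z x + mxform X z y.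
Proof. by rewrite /mxform mulmxDr mxE. Qed.

Lemma mxformZr X a x z : mxform X z (a *: x) = a * mxform X z x.
Proof. by rewrite /mxform -scalemxAr mxE. Qed.

Lemma mxform_shift X x e t : X^T = X ->
  mxform X (x + t *: e) (x + t *: e) =
  mxform X x x + t * (2 * mxform X x e) + t ^+ 2 * mxform X e e.
Proof.
move=> symX; rewrite !(mxformDl, mxformDr, mxformZl, mxformZr) (mxformC e x symX).
ring.
Qed.

Lemma mxformDmx X Y x z : mxform (X + Y) x z = mxform X x z + mxform Y x z.
Proof. by rewrite /mxform mulmxDr mulmxDl mxE. Qed.

Lemma mxformZmx a X x z : mxform (a *: X) x z = a * mxform X x z.
Proof. by rewrite /mxform -scalemxAr -scalemxAl mxE. Qed.

Lemma mxformBmx X Y x z : mxform (X - Y) x z = mxform X x z - mxform Y x z.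
Proof. by rewrite /mxform mulmxBr mulmxBl !mxE. Qed.

Lemma mxform_rank1 y x z : mxform (y *m y^T) x z = (x^T *m y) 0 0 * (y^T *m z) 0 0.
Proof. by rewrite /mxform mulmxA -[_ *m y^T *m z]mulmxA mxE big_ord1. Qed.

Lemma mxform_delta X i e : mxform X (delta_mx i 0) e = (X *m e) i 0.
Proof. by rewrite /mxform trmx_delta -mulmxA -rowE mxE. Qed.

End MxForm.

Section PSD.
Variables (R : realType) (n : nat).
Implicit Types (X Y : 'M[R]_n) (x y z w e : 'cV[R]_n).

Lemma psd_mxform_ge0 X x : psd X -> 0 <= mxform X x x.
Proof. by case=> _; apply. Qed.

Lemma psd_cauchy_schwarz X x e : psd X ->
  mxform X x e ^+ 2 <= mxform X x x * mxform X e e.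
Proof.
move=> psdX; have [symX _] := psdX.
set a := mxform X x x; set b := mxform X x e; set c := mxform X e e.
have quad t : 0 <= a + t * (2 * b) + t ^+ 2 * c.
  by rewrite -mxform_shift //; exact: psd_mxform_ge0.
have [c0|c_neq0] := eqVneq c 0.
  have /eqP : 2 * b = 0.
    by apply: (affine_ge0_slope_eq0 (a := a)) => t; have := quad t; rewrite c0 mulr0 addr0.
  by rewrite mulf_eq0 pnatr_eq0 /= => /eqP ->; rewrite c0 expr0n mulr0.
have c_gt0 : 0 < c by rewrite lt_def c_neq0 psd_mxform_ge0.
have := quad (- b / c).
have -> : a + - b / c * (2 * b) + (- b / c) ^+ 2 * c = (a * c - b ^+ 2) / c.
  by field; rewrite gt_eqF.
by rewrite pmulr_lge0 ?invr_gt0 // subr_ge0.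
Qed.

Lemma psd_mxform_eq0 X e : psd X -> mxform X e e = 0 -> X *m e = 0.
Proof.
move=> psdX ee0; apply/matrixP => i j; rewrite ord1 [RHS]mxE; apply/eqP.
have := psd_cauchy_schwarz (delta_mx i 0) e psdX.
by rewrite ee0 mulr0 mxform_delta => sq_le0; rewrite -sqrf_eq0 eq_le sq_le0 sqr_ge0.
Qed.

Lemma psd_peel X e : psd X -> exists y,
  [/\ psd (X - y *m y^T), y *m y^T *m e = X *m e &
       forall w, X *m w = 0 -> y^T *m w = 0].
Proof.
move=> psdX; have [symX _] := psdX.
have [ee0|ee_neq0] := eqVneq (mxform X e e) 0.
  exists 0; rewrite mul0mx subr0 mul0mx (psd_mxform_eq0 psdX ee0).
  by split => // w _; rewrite trmx0 mul0mx.
have ee_gt0 : 0 < mxform X e e by rewrite lt_def ee_neq0 psd_mxform_ge0.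
set s := (Num.sqrt (mxform X e e))^-1.
have s2 : s ^+ 2 * mxform X e e = 1.
  by rewrite exprVn sqr_sqrtr ?ltW // mulVf // gt_eqF.
have yT : (X *m (s *: e))^T = (s *: e)^T *m X by rewrite trmx_mul symX.
exists (X *m (s *: e)); split.
- split; first by rewrite linearB /= trmx_mul trmxK symX.
  move=> x; rewrite -/(mxform _ x x) mxformBmx mxform_rank1 yT mulmxA.
  rewrite -/(mxform X x (s *: e)) -/(mxform X (s *: e) x) mxformZl mxformZr.
  rewrite (mxformC e x symX) subr_ge0.
  rewrite (_ : _ * _ = s ^+ 2 * mxform X x e ^+ 2); last by ring.
  apply: le_trans (ler_wpM2l (sqr_ge0 s) (psd_cauchy_schwarz x e psdX)) _.
  by rewrite mulrCA s2 mulr1.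
- rewrite -mulmxA yT (mx11_scalar ((s *: e)^T *m X *m e)) -/(mxform X (s *: e) e).
  rewrite mul_mx_scalar -scalemxAr scalerA mxformZl -[RHS]scale1r; congr (_ *: _).
  by rewrite -s2; ring.
- by move=> w Xw; rewrite yT -mulmxA Xw mulmx0.
Qed.

Lemma mulmx_sum_rank1_eq0 (s : seq 'cV[R]_n) w :
  (forall z, z \in s -> z^T *m w = 0) -> (\sum_(z <- s) z *m z^T) *m w = 0.
Proof.
move=> sw; rewrite mulmx_suml big_seq big1 // => z zs.
by rewrite -mulmxA sw ?mulmx0.
Qed.

Lemma psd_peel_seq X (es : seq 'cV[R]_n) : psd X -> exists s : seq 'cV[R]_n,
  [/\ psd (X - \sum_(z <- s) z *m z^T),
       forall e, e \in es -> (X - \sum_(z <- s) z *m z^T) *m e = 0 &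
       forall z, z \in s -> forall w, X *m w = 0 -> z^T *m w = 0].
Proof.
move=> psdX; elim: es => [|e es [s [psdY Yes kerX]]].
  by exists [::]; rewrite big_nil subr0.
set Y := X - _ in psdY Yes.
have [y [psdYy yye kerY]] := psd_peel e psdY.
have kerXY w : X *m w = 0 -> Y *m w = 0.
  by move=> Xw; rewrite mulmxBl Xw mulmx_sum_rank1_eq0 ?subr0 // => z zs; apply: kerX.
exists (y :: s); rewrite big_cons opprD addrA addrAC -/Y; split => //.
- move=> e'; rewrite in_cons => /predU1P [-> | e'es]; first by rewrite mulmxBl yye subrr.
  by rewrite mulmxBl Yes // -mulmxA kerY ?Yes // mulmx0 subrr.
- move=> z; rewrite in_cons => /predU1P [-> | zs] w Xw; first exact/kerY/kerXY.
  exact: kerX.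
Qed.

Lemma psd_sum_rank1 X : psd X -> exists s : seq 'cV[R]_n,
  X = \sum_(z <- s) z *m z^T /\
  forall z, z \in s -> forall w, X *m w = 0 -> z^T *m w = 0.
Proof.
move=> psdX; have [s [_ Y0 kerX]] := psd_peel_seq [seq delta_mx j 0 | j <- enum 'I_n] psdX.
exists s; split => //; apply/eqP; rewrite -subr_eq0; apply/eqP/matrixP => i j.
have := Y0 _ (map_f _ (mem_enum _ j)); rewrite -colE => /matrixP/(_ i 0).
by rewrite !mxE.
Qed.

Lemma psd_rank1 (z : 'cV[R]_n) : psd (z *m z^T).
Proof.
split=> [|x]; first by rewrite trmx_mul trmxK.
rewrite -/(mxform _ x x) mxform_rank1.
have -> : (z^T *m x) 0 0 = (x^T *m z) 0 0 by rewrite -[z^T *m x]trmxK trmx_mul trmxK mxE.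
by rewrite -expr2 sqr_ge0.
Qed.

Lemma psd_convex_cone : convex_cone (@psd R n).
Proof.
move=> X Y [symX X_ge0] [symY Y_ge0] a b a0 b0; split.
  by rewrite linearD !linearZ /= symX symY.
move=> x; rewrite -/(mxform _ x x) mxformDmx !mxformZmx.
by rewrite addr_ge0 ?mulr_ge0 //; [exact: X_ge0 | exact: Y_ge0].
Qed.

Lemma closed_psd : closed (@psd R n).
Proof.
have -> : @psd R n =
    \bigcap_(ij in [set: 'I_n * 'I_n]) [set X : 'M[R]_n | X ij.1 ij.2 - X ij.2 ij.1 = 0] `&`
    \bigcap_(x in [set: 'cV[R]_n]) [set X | 0 <= mxform X x x].
  apply/seteqP; split => X [symX X_ge0].
    by split => [[i j] _ | x _] /=; [rewrite -[in X i j]symX mxE subrr | exact: X_ge0].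
  split => [|x]; last exact: X_ge0.
  apply/matrixP => i j; apply/eqP; rewrite mxE -subr_eq0; apply/eqP; exact: symX (j, i) I.
apply: closedI.
  apply: closed_bigI => -[i j] _.
  apply: (@preimage_closed _ _ (fun X : 'M[R]_n => X i j - X j i) _ _ (@closed_eq _ 0)) => X _.
  by apply: continuousB; exact: coord_continuous.
apply: closed_bigI => x _.
apply: (preimage_closed _ (@closed_ge _ 0)) => X _; exact: continuous_mulmx_coord.
Qed.

End PSD.

Section Cones.
Variables (R : realType) (m n : nat).
Implicit Types (K : set 'M[R]_(m, n)) (x : 'M[R]_(m, n)).

Lemma convex_coneZ K x a : convex_cone K -> K x -> 0 <= a -> K (a *: x).
Proof.
by move=> Kcone Kx a_ge0; have := Kcone x x Kx Kx a 0 a_ge0 (lexx 0); rewrite scale0r addr0.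
Qed.

Lemma convex_cone0 K x : convex_cone K -> K x -> K 0.
Proof. by move=> Kcone Kx; rewrite -(scale0r x); exact: convex_coneZ. Qed.

Lemma convex_coneI K1 K2 : convex_cone K1 -> convex_cone K2 -> convex_cone (K1 `&` K2).
Proof. by move=> K1c K2c x y [] ? ? [] ? ? a b a0 b0; split; [exact: K1c | exact: K2c]. Qed.

Lemma convex_cone_preimage p q (f : {linear 'M[R]_(p, q) -> 'M[R]_(m, n)}) K :
  convex_cone K -> convex_cone (f @^-1` K).
Proof. by move=> Kcone x y Kfx Kfy a b a0 b0; rewrite /= linearP linearZ; exact: Kcone. Qed.

End Cones.

(* [Defs.conv] is qualified because mathcomp-analysis also exports a [conv]. *)
Section ConvexHull.
Variables (R : realType) (n : nat).
Implicit Types (X : 'M[R]_n) (A S : set 'M[R]_n).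

Lemma rank_one_setZ a X : 0 <= a -> rank_one_set X -> rank_one_set (a *: X).
Proof.
move=> a_ge0 [x ->]; exists (Num.sqrt a *: x).
by rewrite linearZ /= -scalemxAl -scalemxAr scalerA -expr2 sqr_sqrtr.
Qed.

Lemma conv_sub_convex_cone A S : convex_cone S -> A `<=` S -> Defs.conv A `<=` S.
Proof.
move=> Scone AS _ [[|k] [lam [P [lam_ge0 [lam1 [PA ->]]]]]].
  by move: lam1; rewrite big_ord0 => /eqP; rewrite eq_sym oner_eq0.
have S0 := convex_cone0 Scone (AS _ (PA ord0)).
elim/big_ind: _ => // [X Y SX SY | i _]; last exact: convex_coneZ Scone (AS _ (PA i)) (lam_ge0 i).
by rewrite -[X]scale1r -[Y]scale1r; exact: Scone.
Qed.

Lemma conv_sum A (s : seq 'M[R]_n) :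
  (forall a X, 0 <= a -> A X -> A (a *: X)) -> s != [::] ->
  (forall X, X \in s -> A X) -> Defs.conv A (\sum_(X <- s) X).
Proof.
move=> AZ s_neq0 sA; set N := size s.
have N_gt0 : 0 < N%:R :> R by rewrite ltr0n lt0n size_eq0.
exists N, (fun=> N%:R^-1), (fun i => N%:R *: s`_i).
split=> [i|]; first by rewrite invr_ge0 ltW.
split; first by rewrite sumr_const card_ord -[_ *+ N]mulr_natr mulVf ?gt_eqF.
split=> [i|]; first by apply/AZ; [exact: ltW | exact/sA/mem_nth].
rewrite (big_nth 0) big_mkord; apply: eq_bigr => i _.
by rewrite scalerA mulVf ?gt_eqF // scale1r.
Qed.

End ConvexHull.

Theorem corollary3p5 (R : realType) (n : nat) (K : set 'cV[R]_n) (c : 'cV[R]_n) :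
  closed_convex_cone K ->
  ROG [set X : 'M[R]_n | @psd R n X /\ K (X *m c)].
Proof.
move=> [Kcl Kcone].
set S := [set X | _].
have Sdef : S = @psd R n `&` (mulmxr c @^-1` K) by [].
have Scone : convex_cone S.
  rewrite Sdef; apply: convex_coneI; first exact: psd_convex_cone.
  exact: (@convex_cone_preimage _ _ _ n _ (mulmxr c) _ Kcone).
split=> //.
- split=> //; rewrite Sdef; apply: closedI; first exact: closed_psd.
  by apply: preimage_closed Kcl => X _; exact: continuous_mulmxr.
- by move=> X [].
apply/seteqP; split; last exact: conv_sub_convex_cone Scone (@subIsetl _ _ _).
move=> X [psdX XcK].
have [y [psdY yyc _]] := psd_peel c psdX.
have Yc : (X - y *m y^T) *m c = 0 by rewrite mulmxBl yyc subrr.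
have [s [Ydef kerY]] := psd_sum_rank1 psdY.
have -> : X = \sum_(z <- [seq z *m z^T | z <- y :: s]) z.
  by rewrite big_map big_cons -Ydef addrC subrK.
apply: conv_sum => // [a Z a_ge0 [SZ RZ] | _ /mapP [z yz ->]].
  by split; [exact: convex_coneZ | exact: rank_one_setZ].
split; last by exists z.
split; first exact: psd_rank1.
move: yz; rewrite in_cons => /predU1P [-> | zs]; first by rewrite yyc.
by rewrite -mulmxA (kerY z zs c Yc) mulmx0; exact: convex_cone0 Kcone XcK.
Qed.
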